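(* Let $\mathbb{V}$ be a finite-dimensional real inner product space with inner product $\langle\cdot,\cdot\rangle$, let $\mathcal{C}\subseteq\mathbb{V}$ be a convex set, let $\mathcal{F}:\mathcal{C}\to\mathbb{V}$ be a map, and let $f:\mathcal{C}\to\mathbb{R}$ be defined by $f(x)=\langle x,\mathcal{F}(x)\rangle$. Suppose that $$\langle x,\mathcal{F}(x)-\mathcal{F}(y)\rangle\ge 0\qquad\text{for all }x,y\in\mathcal{C}.$$ Then $f$ is convex and $\mathcal{F}(x)\in\partial f(x)$ for all $x\in\mathcal{C}$.
   Context: For $x\in\mathcal{C}$, the subdifferential of $f$ at $x$ (relative to $\mathcal{C}$) is $\partial f(x)=\{g\in\mathbb{V}: f(y)\ge f(x)+\langle g,y-x\rangle \text{ for all } y\in\mathcal{C}\}$. *)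

From HB Require Import structures.
From mathcomp Require Import all_boot all_order all_algebra.
From mathcomp Require Import all_classical all_reals.
From mathcomp Require Import convex.
Set Implicit Arguments. Unset Strict Implicit. Unset Printing Implicit Defensive.
Import Order.TTheory GRing.Theory Num.Theory.
Local Open Scope ring_scope.
Local Open Scope classical_set_scope.

Definition is_inner_product (R : realType) (V : lmodType R)
    (ip : V -> V -> R) : Prop :=
  [/\ (forall x y, ip x y = ip y x),
      (forall a x y z, ip (a *: x + y) z = a * ip x z + ip y z),
      (forall x, 0 <= ip x x)
    & (forall x, ip x x = 0 -> x = 0)].

Definition subdifferential (R : realType) (V : lmodType R)
    (ip : V -> V -> R) (C : set V) (f : V -> R) (x : V) : set V :=
  [set g | forall y, C y -> f x + ip g (y - x) <= f y].

From HB Require Import structures.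
From mathcomp Require Import all_boot all_order all_algebra.
From mathcomp Require Import all_classical all_reals.
From mathcomp Require Import convex.
From mathcomp Require Import lra interval_inference.
Set Implicit Arguments. Unset Strict Implicit. Unset Printing Implicit Defensive.
Import Order.TTheory GRing.Theory Num.Theory.
Local Open Scope ring_scope.
Local Open Scope classical_set_scope.
Local Open Scope convex_scope.

(* Expanding [f y - f x - <F x, y - x>] with f(x) = <x, F x> leaves exactly
   [<y, F y - F x>], so the monotonicity hypothesis is the subgradient
   inequality for [F x] at [x].  A function admitting a subgradient at every
   point of a convex set is convex: average the subgradient inequalities at
   [z = t x + (1 - t) y] towards [x] and [y]; the linear terms cancel. *)

Section SymmetricBilinear.
Variables (R : realType) (V : lmodType R) (ip : V -> V -> R).
Hypothesis ipC : forall x y, ip x y = ip y x.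
Hypothesis ip_linearl : forall a x y z, ip (a *: x + y) z = a * ip x z + ip y z.

Lemma ip0l z : ip 0 z = 0.
Proof. by have := ip_linearl 1 0 0 z; rewrite scaler0 addr0 mul1r; lra. Qed.

Lemma ip_linearr a x y z : ip z (a *: x + y) = a * ip z x + ip z y.
Proof. by rewrite ipC ip_linearl ![ip _ z]ipC. Qed.

Lemma ip0r z : ip z 0 = 0.
Proof. by rewrite ipC ip0l. Qed.

Lemma ipZr a x z : ip z (a *: x) = a * ip z x.
Proof. by rewrite -[a *: x]addr0 ip_linearr ip0r addr0. Qed.

Lemma ipBl x y z : ip (x - y) z = ip x z - ip y z.
Proof. by rewrite addrC -scaleN1r ip_linearl mulN1r addrC. Qed.

Lemma ipBr x y z : ip z (x - y) = ip z x - ip z y.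
Proof. by rewrite ipC ipBl ![ip _ z]ipC. Qed.

Lemma ip_subgradient_gap (F : V -> V) x y :
  ip y (F y) - (ip x (F x) + ip (F x) (y - x)) = ip y (F y - F x).
Proof. rewrite ipBr ipBr [ip (F x) y]ipC [ip (F x) x]ipC; lra. Qed.

Lemma convex_function_of_subgradients (C : set V) (f : V -> R) :
  convex_set (C : set (convex_lmodType V)) ->
  (forall x, C x -> exists g, subdifferential ip C f x g) ->
  convex_function (C : set (convex_lmodType V)) f.
Proof.
move=> convC subC t x y; rewrite !inE => Cx Cy.
set z := x <| t |> y.
have Cz : C z by have := convC x y t; rewrite !inE; apply.
have [g gz] := subC z Cz.
have zx := gz x Cx; have zy := gz y Cy.
have t0 : 0 <= t%:inum by [].
have t1 : 0 <= 1 - t%:inum by rewrite subr_ge0 le1.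
have zE : z = t%:inum *: x + (1 - t%:inum) *: y by [].
have lin_cancel : t%:inum * ip g (x - z) + (1 - t%:inum) * ip g (y - z) = 0.
  rewrite -ipZr addrC -ip_linearr -(ip0r g); congr (ip g _).
  rewrite !scalerBr addrACA -opprD -scalerDl subrK scale1r.
  by rewrite zE [_ *: y + _]addrC subrr.
have hx := ler_wpM2l t0 zx; have hy := ler_wpM2l t1 zy.
change (f z <= t%:inum * f x + (1 - t%:inum) * f y); lra.
Qed.

End SymmetricBilinear.

Theorem mainTheorem1 (R : realType) (V : vectType R) (ip : V -> V -> R)
    (C : set V) (F : V -> V) :
  is_inner_product ip ->
  convex_set (C : set (convex_lmodType V)) ->
  (forall x y, C x -> C y -> 0 <= ip x (F x - F y)) ->
  convex_function (C : set (convex_lmodType V)) (fun x : V => ip x (F x))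
  /\ (forall x, C x -> subdifferential ip C (fun z : V => ip z (F z)) x (F x)).
Proof.
move=> [ipC ip_linearl _ _] convC monoF.
set f := fun z : V => ip z (F z).
have subF x : C x -> subdifferential ip C f x (F x).
  move=> Cx y Cy; rewrite -subr_ge0 /f (ip_subgradient_gap ipC ip_linearl).
  exact: monoF.
split=> //; apply: (convex_function_of_subgradients ipC ip_linearl (f := f) convC).
by move=> x Cx; exists (F x); exact: subF.
Qed.
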